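(* Let $(X,\|\cdot\|)$ be a uniformly convex Banach space and let $\{v_n\}_{n\in\mathbb{N}}$ be a sequence of vectors in $X$ such that $\|v_{n+m}\|\le \|v_n+v_m\|$ for all $n,m\in\mathbb{N}$. Then the limit $\lim_{n\to\infty}\frac{v_n}{n}$ exists in $X$.
   Context: $\mathbb{N}=\{1,2,3,\dots\}$. A Banach space $X$ is uniformly convex if for every $\varepsilon>0$ there exists $\delta>0$ such that for all $u,v\in X$ with $\|u\|=\|v\|=1$ and $\|u-v\|\ge\varepsilon$ we have $\|u+v\|\le 2-\delta$. *)

From HB Require Import structures.
From mathcomp Require Import all_boot all_order all_algebra.
From mathcomp Require Import all_classical all_reals all_analysis.
Set Implicit Arguments. Unset Strict Implicit. Unset Printing Implicit Defensive.
Import Order.TTheory GRing.Theory Num.Theory.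
Import numFieldNormedType.Exports.
Local Open Scope ring_scope.

Definition uniformly_convex (R : realType) (X : normedModType R) : Prop :=
  forall eps : R, 0 < eps -> exists2 delta : R, 0 < delta &
    forall u v : X, `|u| = 1 -> `|v| = 1 -> eps <= `|u - v| ->
      `|u + v| <= 2 - delta.

From HB Require Import structures.
From mathcomp Require Import all_boot all_order all_algebra.
From mathcomp Require Import all_classical all_reals all_analysis.
From mathcomp Require Import lra zify.
Import Order.TTheory GRing.Theory Num.Theory.
Import numFieldNormedType.Exports.
Local Open Scope ring_scope.
Local Open Scope classical_set_scope.

(* The norms a n := |v n| are subadditive, so by Fekete's lemma a n / n tends
   to L := inf a n / n.  If L = 0, then v n / n tends to 0.  If L > 0, the
   directions v n / |v n| form a Cauchy sequence, and v n / n, which is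
   a n / n times the direction of v n, converges to L times their limit.
   For the Cauchy property fix eps, let delta be the modulus of convexity at
   eps and eta := delta L / 4.  Then phi k := |v k| - (L - eta) k grows at least
   like eta k, so it attains its minimum on [M, oo) at some m.  If the direction
   of some v k with k <= M were eps away from that of v m, uniform convexity
   would give |v (m + k)| <= |v m + v k| <= |v m| + |v k| - delta L k; with
   phi m <= phi (m + k) this forces |v k| >= (L + 3 eta) k, whereas
   |v k| <= (L + eta) k for k large. *)

Lemma nat_tail_argmin d (T : orderType d) (phi : nat -> T) (M K : nat) :
  (forall k, (K < k)%N -> (phi M <= phi k)%O) ->
  exists2 m, (M <= m)%N & forall k, (M <= k)%N -> (phi m <= phi k)%O.
Proof.
move=> phi_tail; pose i0 : 'I_(M + K).+1 := inord M.
have i0E : nat_of_ord i0 = M by rewrite inordK // ltnS leq_addr.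
have [|i Mi i_min] := @arg_minP _ _ _ i0 (fun i => M <= i)%N (phi \o val).
  by rewrite /= i0E.
exists i => // k Mk; have [kMK|Kk] := leqP k (M + K).
  exact: (i_min (Ordinal (kMK : k < (M + K).+1)%N)).
apply: le_trans (i_min i0 _) _; rewrite /= i0E //.
by apply: phi_tail; apply: leq_ltn_trans Kk; apply: leq_addl.
Qed.

Definition growth_rate {R : realType} (a : nat -> R) : R :=
  inf [set a n / n%:R | n in [set n : nat | (0 < n)%N]].

Section Fekete.
Context {R : realType} {a : nat -> R}.
Hypothesis a_ge0 : forall n, 0 <= a n.
Hypothesis a_subadd :
  forall n m, (0 < n)%N -> (0 < m)%N -> a (n + m)%N <= a n + a m.

Let rates := [set a n / n%:R | n in [set n : nat | (0 < n)%N]].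

Let rates_lbound : lbound rates 0.
Proof. by move=> _ [n _ <-]; rewrite divr_ge0. Qed.

Let rates_neq0 : rates !=set0.
Proof. by exists (a 1%N / 1%:R), 1%N. Qed.

Lemma growth_rate_ge0 : 0 <= growth_rate a.
Proof. exact: lb_le_inf rates_neq0 rates_lbound. Qed.

Lemma growth_rate_le n : (0 < n)%N -> growth_rate a * n%:R <= a n.
Proof.
move=> n0; rewrite -ler_pdivlMr ?ltr0n//.
by apply: ge_inf; [exists 0 | exists n].
Qed.

Lemma subadditive_mulnD k r q : (0 < k)%N -> (0 < r)%N ->
  a (q * k + r)%N <= q%:R * a k + a r.
Proof.
move=> k0 r0; elim: q => [|q IH]; first by rewrite mul0n add0n mul0r add0r.
rewrite mulSn -addnA (le_trans (a_subadd _ _ k0 _)) ?addn_gt0 ?r0 ?orbT//.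
by rewrite mulrSr mulrDl mul1r addrAC [_ + a k]addrC lerD2l.
Qed.

Lemma growth_rate_ge eta : 0 < eta ->
  \forall n \near \oo, a n <= (growth_rate a + eta) * n%:R.
Proof.
move=> eta0; set L := growth_rate a.
have eta20 : 0 < eta / 2 by rewrite divr_gt0.
have rates_inf : has_inf rates by split; [exact: rates_neq0 | exists 0].
have [_ [k k0 <-] akL] := inf_adherent eta20 rates_inf.
have ak : a k <= k%:R * (L + eta / 2).
  by rewrite mulrC -ler_pdivrMr ?ltr0n // ltW.
pose C := \sum_(r < k.+1) a r.
have aC r : (r <= k)%N -> a r <= C.
  move=> rk; rewrite /C (bigD1 (Ordinal (rk : r < k.+1)%N)) //= lerDl.
  exact: sumr_ge0.
near=> n.
have n0 : (0 < n)%N by near: n; exact: nbhs_infty_gt.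
pose q := (n.-1 %/ k)%N; pose r := (n.-1 %% k).+1.
have nqr : n = (q * k + r)%N by rewrite /q /r addnS -divn_eq prednK.
have aqk : q%:R * a k <= n%:R * (L + eta / 2).
  apply: le_trans (ler_wpM2l (ler0n _ _) ak) _.
  rewrite mulrA -natrM ler_wpM2r ?ler_nat ?nqr ?leq_addr //.
  by rewrite addr_ge0 // ?growth_rate_ge0 // ltW.
have ar : a r <= n%:R * (eta / 2).
  have rk : (r <= k)%N by rewrite /r ltn_mod.
  apply: le_trans (aC r rk) _; rewrite -ler_pdivrMr //.
  by near: n; exact: nbhs_infty_ger.
have := @subadditive_mulnD k r q k0 (ltn0Sn _); rewrite -nqr.
have -> : (L + eta) * n%:R = n%:R * (L + eta / 2) + n%:R * (eta / 2).
  by rewrite -mulrDr -addrA -splitr mulrC.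
lra.
Unshelve. all: by end_near. Qed.

Lemma cvg_growth_rate : a n / n%:R @[n --> \oo] --> growth_rate a.
Proof.
apply/cvgrPdist_le => e e0; near=> n.
have n0 : (0 < n)%N by near: n; exact: nbhs_infty_gt.
have n0' : 0 < n%:R :> R by rewrite ltr0n.
rewrite distrC ler_distl ler_pdivlMr // ler_pdivrMr //.
rewrite (le_trans _ (growth_rate_le n n0)) /=; last first.
  by rewrite ler_wpM2r ?gerBl ?ltW.
by near: n; exact: growth_rate_ge.
Unshelve. all: by end_near. Qed.

End Fekete.

Section Direction.
Context {R : realType} {X : normedModType R}.

Definition direction (x : X) : X := `|x|^-1 *: x.

Lemma scale_norm_direction (x : X) : `|x| *: direction x = x.
Proof.
have [->|x0] := eqVneq x 0; first by rewrite normr0 scale0r.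
by rewrite /direction scalerA divff ?normr_eq0 // scale1r.
Qed.

Lemma uniformly_convex_normD : uniformly_convex X ->
  forall eps, 0 < eps -> exists2 delta : R, 0 < delta &
    forall x y : X, x != 0 -> y != 0 ->
      eps <= `|direction x - direction y| ->
      `|x + y| <= `|x| + `|y| - delta * Num.min `|x| `|y|.
Proof.
move=> UC eps eps0; have [delta delta0 UCdelta] := UC eps eps0.
exists delta => // x y.
wlog xy : x y / `|x| <= `|y|.
  move=> W x0 y0 far.
  case/orP: (le_total `|x| `|y|) => [xy|yx]; first exact: W.
  rewrite addrC minC [`|x| + _]addrC; apply: W yx y0 x0 _.
  by rewrite -normrN opprB.
move=> x0 y0 far; rewrite (min_idPl xy).
have dir1 z : z != 0 -> `|direction z| = 1 by exact: normfZV.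
have -> : x + y =
    `|x| *: (direction x + direction y) + (`|y| - `|x|) *: direction y.
  by rewrite scalerDr scalerBl !scale_norm_direction addrACA subrr addr0.
apply: le_trans (ler_normD _ _) _.
rewrite !normrZ !ger0_norm ?subr_ge0 // mulVf ?normr_eq0 // mulr1.
have := UCdelta _ _ (dir1 x x0) (dir1 y y0) far.
move=> /(ler_wpM2l (normr_ge0 x)); lra.
Qed.

End Direction.

Section LimitDirection.
Context {R : realType} {X : normedModType R}.
Context {v : nat -> X} {L : R}.
Hypothesis UC : uniformly_convex X.
Hypothesis v_subadd :
  forall n m, (0 < n)%N -> (0 < m)%N -> `|v (n + m)%N| <= `|v n + v m|.
Hypothesis L_gt0 : 0 < L.
Hypothesis v_ge : forall n, (0 < n)%N -> L * n%:R <= `|v n|.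
Hypothesis v_le : forall eta, 0 < eta ->
  \forall n \near \oo, `|v n| <= (L + eta) * n%:R.

Lemma direction_close_to_minimizer eps : 0 < eps ->
  exists N, forall M, exists m, forall k, (N <= k <= M)%N ->
    `|direction (v k) - direction (v m)| < eps.
Proof.
move=> eps0; have [delta delta0 UCdefect] := uniformly_convex_normD UC _ eps0.
pose eta := delta * L / 4.
have eta0 : 0 < eta by rewrite divr_gt0 // mulr_gt0.
have [N _ v_le_eta] := v_le _ eta0.
exists (maxn N 1) => M.
pose phi k := `|v k| - (L - eta) * k%:R.
have phi_ge k : eta * k%:R <= phi k.
  have [->|k0] := posnP k; first by rewrite /phi !mulr0 subr0.
  by have := v_ge _ k0; rewrite /phi mulrBl; lra.
have [m Mm m_min] : exists2 m, (M <= m)%N &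
    forall k, (M <= k)%N -> phi m <= phi k.
  apply: (@nat_tail_argmin _ _ phi M (Num.truncn (phi M / eta))) => k Kk.
  apply: le_trans (phi_ge k); rewrite -ler_pdivrMl // mulrC.
  by apply/ltW/(lt_le_trans (truncnS_gt _)); rewrite ler_nat.
exists m => k /andP[Nk kM]; rewrite ltNge; apply/negP => far.
have k0 : (0 < k)%N by lia.
have m0 : (0 < m)%N by lia.
have Lk0 : 0 < L * k%:R by rewrite mulr_gt0 // ltr0n.
have Lkm : L * k%:R <= L * m%:R by rewrite ler_pM2l // ler_nat; lia.
have vk_ge := v_ge _ k0.
have vm_ge := le_trans Lkm (v_ge _ m0).
have vk_le := v_le_eta k (leq_trans (leq_maxl _ _) Nk).
have vk0 : v k != 0 by rewrite -normr_gt0 (lt_le_trans Lk0).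
have vm0 : v m != 0 by rewrite -normr_gt0 (lt_le_trans Lk0).
have defect := UCdefect _ _ vk0 vm0 far.
have min_ge : L * k%:R <= Num.min `|v k| `|v m| by rewrite le_min vk_ge.
have := ler_wpM2l (ltW delta0) min_ge.
have := m_min (m + k)%N (leq_trans Mm (leq_addr _ _)).
have := v_subadd _ _ k0 m0.
have : 0 < delta * (L * k%:R) by rewrite mulr_gt0.
rewrite /phi addnC natrD /eta in vk_le *; lra.
Qed.

Lemma cauchy_direction : cauchy (direction (v n) @[n --> \oo]).
Proof.
apply: cauchy_exP => e e0.
have [N close] := direction_close_to_minimizer _ (divr_gt0 e0 (ltr0n R 2)).
exists (direction (v N)); exists N => // k /= Nk.
rewrite -ball_normE /ball_ /=.
have [m closem] := close k.
rewrite -(subrKA (direction (v m))) (splitr e).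
apply: le_lt_trans (ler_normD _ _) _.
rewrite ltrD ?closem ?leqnn ?Nk // -normrN opprB closem //.
by rewrite leqnn Nk.
Qed.

End LimitDirection.

Theorem mainTheorem1 (R : realType) (X : completeNormedModType R)
  (v : nat -> X) :
  uniformly_convex X ->
  (forall n m : nat, (0 < n)%N -> (0 < m)%N -> `|v (n + m)%N| <= `|v n + v m|) ->
  cvg ((fun n : nat => (n%:R)^-1 *: v n) @ \oo).
Proof.
move=> UC v_subadd.
have norm_subadd n m : (0 < n)%N -> (0 < m)%N ->
    `|v (n + m)%N| <= `|v n| + `|v m|.
  by move=> n0 m0; exact: le_trans (v_subadd n m n0 m0) (ler_normD _ _).
have norm_ge0 n : 0 <= `|v n| by [].
set L := growth_rate (fun n => `|v n|).
have rate := cvg_growth_rate norm_ge0 norm_subadd.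
have := growth_rate_ge0 norm_ge0; rewrite le_eqVlt => /orP[/eqP L0|L_gt0].
  apply: (cvgP 0); apply: norm_cvg0.
  have -> : (fun n => `|n%:R^-1 *: v n|) = (fun n => `|v n| / n%:R).
    by apply/funext => n; rewrite normrZ ger0_norm ?invr_ge0 // mulrC.
  by rewrite L0; exact: rate.
have /cvg_ex[w dir_w] : cvg (direction (v n) @[n --> \oo]).
  apply: cauchy_cvg; apply: (cauchy_direction UC v_subadd L_gt0).
    exact: growth_rate_le.
  exact: growth_rate_ge.
apply: (cvgP (L *: w)).
have -> : (fun n => n%:R^-1 *: v n) =
    (fun n => (`|v n| / n%:R) *: direction (v n)).
  by apply/funext => n; rewrite mulrC -scalerA scale_norm_direction.
exact: cvgZ rate dir_w.
Qed.
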